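(* Let $A\subseteq\mathbb{Z}^n$ be finite, $k\in\mathbb{N}$ and $f\in\mathbb{R}[t_1^{\pm1},\dots,t_n^{\pm1}]_{k\cdot A}$. The following are equivalent: (ii) $f$ is strictly $A$-copositive; (iii) $f^{k\cdot(F\cap A)}(t)>0$ for all $t\in\mathbb{R}^n_{>0}$ and all nonempty faces $F$ of $\operatorname{conv}(A)$; (iv) $f^G(t)>0$ for all $t\in\mathbb{R}^n_{>0}$ and all nonempty faces $G$ of $\operatorname{conv}(k\cdot A)$.
   Context: Notation: $A=\{a_1,\dots,a_m\}$, $k\cdot A=\{\sum_j v_ja_j: v_j\in\mathbb{N},\sum_jv_j=k\}$, and $\mathbb{R}[t^{\pm1}]_S$ is the space of Laurent polynomials with support in $S$. For $f=\sum_b c_bt^b$ and $S\subseteq\mathbb{R}^n$, the truncation is $f^S=\sum_{b\in S\cap\mathbb{Z}^n}c_bt^b$. Let $Y_{\hat A}\subseteq\mathbb{C}^m$ be the Zariski closure of the image of $(u,t)\mapsto(ut^{a_1},\dots,ut^{a_m})$ on $(\mathbb{C}^* )^{n+1}$ and $(Y_{\hat A})_{\ge0}=Y_{\hat A}\cap\mathbb{R}^m_{\ge0}$. For $f=\sum_{b\in k\cdot A}c_bt^b$ choose $v_{jb}\in\mathbb{N}$ with $\sum_jv_{jb}=k$, $b=\sum_jv_{jb}a_j$, and let $\hat f(y)=\sum_bc_b\prod_jy_j^{v_{jb}}$ (its values on $Y_{\hat A}$ are independent of the choice). $f$ is strictly $A$-copositive if $\hat f>0$ on $(Y_{\hat A})_{\ge0}\setminus\{0\}$.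 *)

From HB Require Import structures.
From mathcomp Require Import all_boot all_order all_algebra.
From mathcomp Require Import boolp classical_sets reals.
From mathcomp Require Import complex.
From mathcomp Require mpoly.

Set Implicit Arguments.
Unset Strict Implicit.
Unset Printing Implicit Defensive.

Import Order.TTheory GRing.Theory Num.Theory.
Local Open Scope ring_scope.
Local Open Scope classical_set_scope.

Section Defs.
Variables (R : realType) (n m : nat).

Definition toR (b : 'rV[int]_n) : 'rV[R]_n := map_mx (fun z : int => z%:~R) b.

Definition dotR (w x : 'rV[R]_n) : R := \sum_(i < n) w 0 i * x 0 i.

Definition conv (S : set 'rV[R]_n) : set 'rV[R]_n :=
  [set x | exists (p : nat) (q : 'I_p -> 'rV[R]_n) (l : 'I_p -> R),
     [/\ forall i, S (q i), forall i, 0 <= l i, \sum_(i < p) l i = 1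
       & x = \sum_(i < p) l i *: q i]].

(* F is a face of the convex set P (intersection with a supporting hyperplane;
   w = 0, h = 0 gives P itself). *)
Definition face (P F : set 'rV[R]_n) : Prop :=
  exists (w : 'rV[R]_n) (h : R),
    (forall x, P x -> dotR w x <= h) /\ F = [set x | P x /\ dotR w x = h].

(* The point set A = {a_1, ..., a_m} is given by a : 'I_m -> Z^n. *)
Variable a : 'I_m -> 'rV[int]_n.

(* k.(S cap A) = { sum_j v_j a_j : v_j in N, sum_j v_j = k, v_j > 0 -> a_j in S }.
   With S = setT this is k.A. *)
Definition kdil (S : set 'rV[int]_n) (k : nat) : set 'rV[int]_n :=
  [set b | exists v : 'I_m -> nat,
     [/\ \sum_(j < m) v j = k, (forall j, (0 < v j)%N -> S (a j))
       & b = \sum_(j < m) (v j)%:Z *: a j]].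

(* Duplicate-free enumeration of k.A (all v_j <= k automatically). *)
Definition kA_seq (k : nat) : seq 'rV[int]_n :=
  undup (map (fun v : {ffun 'I_m -> 'I_k.+1} => \sum_(j < m) ((v j : nat)%:Z *: a j))
    (filter (fun v : {ffun 'I_m -> 'I_k.+1} => (\sum_(j < m) (v j : nat) == k)%N)
       (enum {ffun 'I_m -> 'I_k.+1}))).

Definition mono (b : 'rV[int]_n) (t : 'rV[R]_n) : R := \prod_(i < n) t 0 i ^ b 0 i.

(* A Laurent polynomial f in R[t^{+-1}]_{k.A} is given by its coefficient map c,
   which vanishes outside k.A.  Its truncation to S (a subset of Z^n): *)
Definition trunc (k : nat) (c : 'rV[int]_n -> R) (S : set 'rV[int]_n)
  (t : 'rV[R]_n) : R :=
  \sum_(b <- kA_seq k | b \in S) c b * mono b t.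

(* Y_{hat A}: Zariski closure in C^m of the image of
   (u,t) |-> (u t^{a_1}, ..., u t^{a_m}) on (C^* )^{n+1}. *)
Definition inY (y : 'I_m -> R[i]) : Prop :=
  forall p : mpoly.mpoly m R[i],
    (forall (u : R[i]) (t : 'I_n -> R[i]), u != 0 -> (forall i, t i != 0) ->
       mpoly.meval (fun j => u * \prod_(i < n) t i ^ (a j 0 i)) p = 0) ->
    mpoly.meval y p = 0.

Definition rep_choice (k : nat) (v : 'rV[int]_n -> 'I_m -> nat) : Prop :=
  forall b, kdil setT k b ->
    \sum_(j < m) v b j = k /\ b = \sum_(j < m) (v b j)%:Z *: a j.

Definition fhat (k : nat) (c : 'rV[int]_n -> R) (v : 'rV[int]_n -> 'I_m -> nat)
  (y : 'I_m -> R) : R :=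
  \sum_(b <- kA_seq k) c b * \prod_(j < m) y j ^+ v b j.

Definition strictly_copositive (k : nat) (c : 'rV[int]_n -> R) : Prop :=
  forall y : 'I_m -> R, (forall j, 0 <= y j) -> (exists j, y j != 0) ->
    inY (fun j => ((y j)%:C)%C) ->
    forall v, rep_choice k v -> 0 < fhat k c v y.

End Defs.

(* A nonzero point y of (Y_Ahat)>=0 is supported on the points of a face F of
   conv A, and y_j = u t^(a_j) there.  Indeed, if the support S of y were not
   cut out by a supporting hyperplane, Motzkin's transposition theorem would
   give an affine relation al - be among the a_j with al using a point off S
   and be supported on S, contradicting y^al = y^be on Y; and on S these
   binomial relations force log y_j to be an affine function of a_j.
   Conversely each such point is in Y, as a one-parameter monomial
   degeneration of the parametrization.  At such a point
   hat f (y) = u^k f^(k.(F cap A))(t), which gives (ii) <-> (iii).  The faces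
   of conv(k.A) are cut out by the same linear forms as those of conv A, with
   the height multiplied by k, which gives (iii) <-> (iv). *)

From HB Require Import structures.
From mathcomp Require Import all_boot all_order all_algebra.
From mathcomp Require Import boolp classical_sets reals.
From mathcomp Require Import complex.
From mathcomp Require mpoly.
From mathcomp Require Import ring lra.
From mathcomp Require Import sequences exp.
Import (canonicals) mpoly.
Set Implicit Arguments.
Unset Strict Implicit.
Unset Printing Implicit Defensive.
Import Order.TTheory GRing.Theory Num.Theory.
Local Open Scope ring_scope.
Local Open Scope classical_set_scope.

Section FourierMotzkin.
Variable F : realFieldType.

Lemma separating_point (I : finType) (P N J : pred I) (x : I -> F) :
  (forall p q, P p -> N q -> x p <= x q /\ (J p || J q -> x p < x q)) ->
  exists z, (forall p, P p -> x p <= z /\ (J p -> x p < z)) /\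
            (forall q, N q -> z <= x q /\ (J q -> z < x q)).
Proof.
move=> sep.
case: (pickP P) => [p0 Pp0 | noP]; case: (pickP N) => [q0 Nq0 | noN].
- case: (arg_maxP x Pp0) => ps Pps maxP; case: (arg_minP x Nq0) => qs Nqs minN.
  have [le_ps_qs lt_ps_qs] := sep ps qs Pps Nqs.
  case: (ltrP (x ps) (x qs)) => [lt_x | ge_x].
    exists ((x ps + x qs) / 2); split=> [p /maxP | q /minN] /= h; split=> [|_]; lra.
  have eq_x : x ps = x qs by apply/eqP; rewrite eq_le le_ps_qs.
  exists (x ps); split=> [p Pp | q Nq].
    split=> [|Jp]; first exact: maxP.
    by rewrite eq_x; apply: (sep p qs Pp Nqs).2; rewrite Jp.
  rewrite eq_x; split=> [|Jq]; first exact: minN.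
  by rewrite -eq_x; apply: (sep ps q Pps Nq).2; rewrite Jq orbT.
- case: (arg_maxP x Pp0) => ps _ maxP.
  exists (x ps + 1); split=> [p /maxP /= h | q]; last by rewrite noN.
  by split=> [|_]; lra.
- case: (arg_minP x Nq0) => qs _ minN.
  exists (x qs - 1); split=> [p | q /minN /= h]; first by rewrite noP.
  by split=> [|_]; lra.
- by exists 0; split=> i; rewrite ?noP ?noN.
Qed.

Lemma fourier_motzkin_step (I : finType) (r c : I -> F) (J : pred I) :
  (forall i, c i = 0 -> 0 <= r i /\ (J i -> 0 < r i)) ->
  (forall p q, 0 < c p -> c q < 0 ->
     0 <= - c q * r p + c p * r q /\ (J p || J q -> 0 < - c q * r p + c p * r q)) ->
  exists z, forall i, 0 <= r i + c i * z /\ (J i -> 0 < r i + c i * z).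
Proof.
move=> zero_rows pair_rows.
pose x p := - r p / c p.
have pos_row p z : 0 < c p -> r p + c p * z = c p * (z - x p).
  by move=> cp; rewrite /x; field; rewrite gt_eqF.
have neg_row q z : c q < 0 -> r q + c q * z = - c q * (x q - z).
  by move=> cq; rewrite /x; field; rewrite lt_eqF.
have [z [lo hi]] : exists z,
    (forall p, 0 < c p -> x p <= z /\ (J p -> x p < z)) /\
    (forall q, c q < 0 -> z <= x q /\ (J q -> z < x q)).
  apply: separating_point => p q cp cq.
  have cpq : 0 < c p * - c q by rewrite mulr_gt0 // oppr_gt0.
  have [le lt] := pair_rows p q cp cq.
  have E : - c q * r p + c p * r q = c p * - c q * (x q - x p).
    by rewrite /x; field; rewrite gt_eqF // lt_eqF.
  rewrite E in le lt.
  by rewrite -subr_ge0 -subr_gt0 -(pmulr_rge0 _ cpq) -(pmulr_rgt0 _ cpq).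
exists z => i; case: (ltgtP (c i) 0) => [ci | ci | ci].
- have [le lt] := hi i ci; have nci : 0 < - c i by rewrite oppr_gt0.
  rewrite neg_row // pmulr_rge0 // pmulr_rgt0 // subr_ge0 subr_gt0.
  by split.
- have [le lt] := lo i ci.
  rewrite pos_row // pmulr_rge0 // pmulr_rgt0 // subr_ge0 subr_gt0.
  by split.
- by rewrite ci mul0r addr0; apply: zero_rows.
Qed.

Definition dot_upto (d : nat) (v x : nat -> F) : F := \sum_(k < d) v k * x k.

Section Elimination.
Variables (d : nat) (I : finType) (v : I -> nat -> F) (J : pred I).
Local Notation c i := (v i d).

(* The system obtained by eliminating coordinate d: the rows with zero d-th
   coefficient, and for each pair of rows with d-th coefficients of opposite
   signs, their positive combination cancelling it. *)
Definition fm_row (i' : I + I * I) : nat -> F :=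
  match i' with
  | inl i => if c i == 0 then v i else fun _ => 0
  | inr (p, q) => if (0 < c p) && (c q < 0) then fun k => - c q * v p k + c p * v q k
                  else fun _ => 0
  end.

Definition fm_strict (i' : I + I * I) : bool :=
  match i' with
  | inl i => (c i == 0) && J i
  | inr (p, q) => [&& 0 < c p, c q < 0 & J p || J q]
  end.

Lemma fm_row_last i' : fm_row i' d = 0.
Proof.
case: i' => [i | [p q]] /=; first by case: eqP.
by case: ifP => // _; ring.
Qed.

Lemma dot_upto_last (w x : nat -> F) :
  dot_upto d.+1 w x = dot_upto d w x + w d * x d.
Proof. by rewrite /dot_upto big_ord_recr. Qed.

Lemma fm_lift_solution x :
  (forall i', 0 <= dot_upto d (fm_row i') x /\
              (fm_strict i' -> 0 < dot_upto d (fm_row i') x)) ->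
  exists x', forall i, 0 <= dot_upto d.+1 (v i) x' /\ (J i -> 0 < dot_upto d.+1 (v i) x').
Proof.
move=> sol; pose r i := dot_upto d (v i) x.
have [z Hz] : exists z, forall i, 0 <= r i + c i * z /\ (J i -> 0 < r i + c i * z).
  apply: fourier_motzkin_step => [i ci | p q cp cq].
    by have := sol (inl i); rewrite /= ci eqxx.
  have := sol (inr (p, q)); rewrite /= cp cq /=.
  suff -> : dot_upto d (fun k => - c q * v p k + c p * v q k) x = - c q * r p + c p * r q by [].
  by rewrite /dot_upto /r !mulr_sumr -big_split /=; apply: eq_bigr => k _; ring.
exists (fun k => if k == d then z else x k) => i.
rewrite dot_upto_last eqxx (_ : dot_upto d _ _ = r i); first exact: Hz.
by apply: eq_bigr => k _; rewrite ltn_eqF.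
Qed.

Definition fm_weight (l' : I + I * I -> F) (i : I) : F :=
  (if c i == 0 then l' (inl i) else 0)
  + \sum_q (if (0 < c i) && (c q < 0) then l' (inr (i, q)) * - c q else 0)
  + \sum_p (if (0 < c p) && (c i < 0) then l' (inr (p, i)) * c p else 0).

Variable l' : I + I * I -> F.
Hypothesis l'_ge0 : forall i', 0 <= l' i'.

Let first_ge0 i : 0 <= (if c i == 0 then l' (inl i) else 0).
Proof. by case: ifP. Qed.

Let second_ge0 i q : 0 <= (if (0 < c i) && (c q < 0) then l' (inr (i, q)) * - c q else 0).
Proof. by case: ifP => // /andP [_ cq]; rewrite mulr_ge0 // oppr_ge0 ltW. Qed.

Let third_ge0 i p : 0 <= (if (0 < c p) && (c i < 0) then l' (inr (p, i)) * c p else 0).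
Proof. by case: ifP => // /andP [cp _]; rewrite mulr_ge0 // ltW. Qed.

Local Hint Resolve first_ge0 second_ge0 third_ge0 : core.

Lemma fm_weight_ge0 i : 0 <= fm_weight l' i.
Proof. by rewrite /fm_weight !addr_ge0 ?sumr_ge0. Qed.

Lemma fm_weight_combination k :
  \sum_i fm_weight l' i * v i k = \sum_i' l' i' * fm_row i' k.
Proof.
rewrite big_sumType /=.
under eq_bigr => i _ do rewrite /fm_weight !mulrDl !mulr_suml.
rewrite !big_split /= -addrA; congr (_ + _).
  by apply: eq_bigr => i _; case: ifP => _; rewrite ?mul0r ?mulr0.
rewrite [X in _ + X]exchange_big -big_split /=.
under eq_bigr => p _ do rewrite -big_split /=.
rewrite pair_big /=; apply: eq_bigr => -[p q] _ /=.
by case: ifP => _; rewrite ?mul0r ?mulr0 ?addr0 //; ring.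
Qed.

Lemma fm_weight_strict i' : fm_strict i' -> 0 < l' i' -> exists i, J i /\ 0 < fm_weight l' i.
Proof.
case: i' => [i | [p q]] /=.
  case/andP => ci Ji li; exists i; split => //.
  apply: lt_le_trans li _; rewrite /fm_weight ci -addrA lerDl.
  by rewrite addr_ge0 // sumr_ge0.
case/and3P => cp cq /orP [Jp | Jq] lpq.
  exists p; split => //.
  have term : 0 < l' (inr (p, q)) * - c q by rewrite mulr_gt0 // oppr_gt0.
  apply: (lt_le_trans term).
  rewrite /fm_weight -addrA addrCA (bigD1 q) //= {1}cp {1}cq /= -addrA lerDl.
  by rewrite !addr_ge0 ?sumr_ge0.
exists q; split => //.
have term : 0 < l' (inr (p, q)) * c p by rewrite mulr_gt0.
apply: (lt_le_trans term).
rewrite /fm_weight [X in _ + X](bigD1 p) //= {1}cp {1}cq /= addrCA lerDl.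
by rewrite !addr_ge0 ?sumr_ge0.
Qed.

End Elimination.

Lemma motzkin_transposition d (I : finType) (v : I -> nat -> F) (J : pred I) :
  (exists x, forall i, 0 <= dot_upto d (v i) x /\ (J i -> 0 < dot_upto d (v i) x))
  \/ (exists l : I -> F, [/\ forall i, 0 <= l i,
        forall k, (k < d)%N -> \sum_i l i * v i k = 0 &
        exists i, J i /\ 0 < l i]).
Proof.
elim: d I v J => [|d IH] I v J.
  case: (pickP J) => [i0 Ji0 | noJ].
    right; exists (fun i => (i == i0)%:R); split => //.
    by exists i0; rewrite eqxx ltr01.
  by left; exists (fun=> 0) => i; rewrite /dot_upto big_ord0 noJ.
case: (IH _ (fm_row d v) (fm_strict d v J)) => [[x sol] | [l' [l'_ge0 l'_comb [i' [Ji' li']]]]].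
  by left; apply: fm_lift_solution sol.
right; exists (fm_weight d v l'); split.
- exact: fm_weight_ge0.
- move=> k; rewrite ltnS leq_eqVlt => /orP [/eqP -> | lt_kd]; rewrite fm_weight_combination.
    by apply: big1 => j _; rewrite fm_row_last mulr0.
  exact: l'_comb.
- exact: fm_weight_strict Ji' li'.
Qed.

End FourierMotzkin.

Lemma rat_common_denominator (I : finType) (q : I -> rat) :
  exists (D : int) (z : I -> int), 0 < D /\ forall i, q i * D%:~R = (z i)%:~R.
Proof.
exists (\prod_j denq (q j)), (fun i => numq (q i) * \prod_(j | j != i) denq (q j)).
split; first by apply: prodr_gt0 => j _; exact: denq_gt0.
by move=> i; rewrite (bigD1 i) //= rmorphM mulrA -numqE -rmorphM.
Qed.

Section IntegralFaces.
Variables (n m : nat) (a : 'I_m -> 'rV[int]_n).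

Definition face_indices (S : pred 'I_m) : Prop :=
  exists (w : 'I_n -> int) (h : int), forall j,
    \sum_i w i * a j 0 i <= h /\ (\sum_i w i * a j 0 i == h) = S j.

Definition outward_relation (S : pred 'I_m) : Prop :=
  exists al be : 'I_m -> nat,
    [/\ forall j, ~~ S j -> be j = 0%N,
        exists j, ~~ S j /\ (0 < al j)%N,
        (\sum_j al j = \sum_j be j)%N &
        \sum_j (al j)%:Z *: a j = \sum_j (be j)%:Z *: a j].

(* The point (-a_j, 1) of Q^(n+1), indexed by nat; index n carries the 1. *)
Definition lifted_point (j : 'I_m) (k : nat) : rat :=
  if insub k is Some i then - (a j 0 i)%:~R else (k == n)%:R.

Lemma lifted_point_coord j (i : 'I_n) : lifted_point j i = - (a j 0 i)%:~R.
Proof. by rewrite /lifted_point valK. Qed.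

Lemma lifted_point_last j : lifted_point j n = 1.
Proof. by rewrite /lifted_point insubF ?ltnn // eqxx. Qed.

Lemma dot_lifted_point j x :
  dot_upto n.+1 (lifted_point j) x = x n - \sum_(i < n) (a j 0 i)%:~R * x i.
Proof.
rewrite /dot_upto big_ord_recr /= lifted_point_last mul1r addrC -sumrN.
by congr (_ + _); apply: eq_bigr => i _; rewrite lifted_point_coord mulNr.
Qed.

Section Alternative.
Variable S : pred 'I_m.

(* Solutions (w, h) of this system are the hyperplanes w.a <= h tight exactly on S. *)
Definition support_rows (p : 'I_m + 'I_m) : nat -> rat :=
  match p with
  | inl j => lifted_point j
  | inr j => if S j then fun k => - lifted_point j k else fun=> 0
  end.

Definition support_strict (p : 'I_m + 'I_m) : bool :=
  if p is inl j then ~~ S j else false.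

Lemma face_indices_of_solution x :
  (forall p, 0 <= dot_upto n.+1 (support_rows p) x /\
             (support_strict p -> 0 < dot_upto n.+1 (support_rows p) x)) ->
  face_indices S.
Proof.
move=> sol; pose g j := x n - \sum_(i < n) (a j 0 i)%:~R * x i.
have g_ge0 j : 0 <= g j /\ (~~ S j -> 0 < g j).
  by have := sol (inl j); rewrite /= dot_lifted_point.
have g_eq0 j : S j -> g j = 0.
  move=> Sj; have [+ _] := sol (inr j); rewrite /= Sj.
  rewrite (_ : dot_upto _ _ _ = - dot_upto n.+1 (lifted_point j) x); last first.
    by rewrite /dot_upto -sumrN; apply: eq_bigr => k _; rewrite mulNr.
  by rewrite dot_lifted_point oppr_ge0 => ?; apply/eqP; rewrite eq_le (g_ge0 j).1 andbT.
have [D [z [D_gt0 Hz]]] := rat_common_denominator (fun k : 'I_n.+1 => x k).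
exists (fun i => z (widen_ord (leqnSn n) i)), (z ord_max) => j.
have E : (z ord_max - \sum_i z (widen_ord (leqnSn n) i) * a j 0 i)%:~R = D%:~R * g j :> rat.
  rewrite rmorphB rmorph_sum /= -Hz mulrBr mulr_sumr mulrC; congr (_ - _).
  by apply: eq_bigr => i _; rewrite rmorphM /= -Hz /=; ring.
have D_pos : 0 < D%:~R :> rat by rewrite ltr0z.
have [g0 g1] := g_ge0 j.
split; first by rewrite -subr_ge0 -(ler0z rat) E mulr_ge0 // ltW.
rewrite eq_sym -subr_eq0 -(eqr_int rat) E mulf_eq0 gt_eqF //=.
by case: (boolP (S j)) => Sj; [rewrite g_eq0 ?eqxx | rewrite gt_eqF ?g1].
Qed.

Lemma outward_relation_of_certificate (l : 'I_m + 'I_m -> rat) :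
  (forall p, 0 <= l p) ->
  (forall k, (k < n.+1)%N -> \sum_p l p * support_rows p k = 0) ->
  (exists p, support_strict p /\ 0 < l p) ->
  outward_relation S.
Proof.
move=> l_ge0 l_comb [p0 [Jp0 lp0]].
pose lam j := l (inl j); pose rho j := if S j then l (inr j) else 0.
have balance k : (k < n.+1)%N ->
    \sum_j lam j * lifted_point j k = \sum_j rho j * lifted_point j k.
  move=> /l_comb; rewrite big_sumType /= => /eqP; rewrite addr_eq0 => /eqP ->.
  rewrite -sumrN; apply: eq_bigr => j _; rewrite /rho.
  by case: (S j); rewrite ?mulrN ?opprK ?mul0r ?mulr0 ?oppr0.
pose f (p : 'I_m + 'I_m) := match p with inl j => lam j | inr j => rho j end.
have [D [z [D_gt0 Hz]]] := rat_common_denominator f.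
have D_pos : 0 < D%:~R :> rat by rewrite ltr0z.
have f_ge0 p : 0 <= f p by case: p => [j|j] /=; [exact: l_ge0 | rewrite /rho; case: (S j)].
have z_ge0 p : 0 <= z p by rewrite -(ler0z rat) -Hz mulr_ge0 // ltW.
pose al j := `|z (inl j)|%N; pose be j := `|z (inr j)|%N.
have alZ j : (al j)%:Z = z (inl j) by rewrite gez0_abs.
have beZ j : (be j)%:Z = z (inr j) by rewrite gez0_abs.
have alQ j : (al j)%:R = lam j * D%:~R :> rat.
  by rewrite -[_%:R]/(((al j)%:Z)%:~R : rat) alZ -(Hz (inl j)).
have beQ j : (be j)%:R = rho j * D%:~R :> rat.
  by rewrite -[_%:R]/(((be j)%:Z)%:~R : rat) beZ -(Hz (inr j)).
exists al, be; split.
- move=> j Sj; apply/eqP; rewrite -(eqr_nat rat) beQ /rho (negbTE Sj) mul0r //.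
- case: p0 Jp0 lp0 => // j /= Sj lj; exists j; split => //.
  by rewrite -(ltr0n rat) alQ mulr_gt0.
- apply/eqP; rewrite -(eqr_nat rat) !natr_sum.
  under eq_bigr => j _ do rewrite alQ.
  under [X in _ == X]eq_bigr => j _ do rewrite beQ.
  rewrite -!mulr_suml; apply/eqP; congr (_ * _).
  have := balance n (ltnSn n); under eq_bigr => j _ do rewrite lifted_point_last mulr1.
  by under [X in _ = X -> _]eq_bigr => j _ do rewrite lifted_point_last mulr1.
- apply/rowP => i; rewrite !summxE; apply/eqP; rewrite -(eqr_int rat) !rmorph_sum /=.
  under eq_bigr => j _ do rewrite mxE rmorphM /= alZ -Hz.
  under [X in _ == X]eq_bigr => j _ do rewrite mxE rmorphM /= beZ -Hz.
  have E : \sum_j lam j * (a j 0 i)%:~R = \sum_j rho j * (a j 0 i)%:~R.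
    apply: oppr_inj; rewrite -!sumrN.
    under eq_bigr => j _ do rewrite -mulrN -lifted_point_coord.
    under [RHS]eq_bigr => j _ do rewrite -mulrN -lifted_point_coord.
    exact: balance (ltn_trans (ltn_ord i) (ltnSn n)).
  apply/eqP; transitivity (D%:~R * \sum_j lam j * (a j 0 i)%:~R).
    by rewrite mulr_sumr; apply: eq_bigr => j _ /=; ring.
  by rewrite E mulr_sumr; apply: eq_bigr => j _ /=; ring.
Qed.

End Alternative.

Lemma face_or_outward_relation (S : pred 'I_m) : face_indices S \/ outward_relation S.
Proof.
case: (motzkin_transposition n.+1 (support_rows S) (support_strict S)).
  by move=> [x sol]; left; apply: face_indices_of_solution sol.
by move=> [l [l_ge0 l_comb l_pos]]; right; apply: outward_relation_of_certificate l_pos.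
Qed.

End IntegralFaces.

Lemma exprz_sum (K : fieldType) (x : K) (I : finType) (f : I -> int) :
  x != 0 -> x ^ (\sum_i f i) = \prod_i x ^ f i.
Proof.
move=> x0; apply: (big_morph (fun z => x ^ z)) => [z1 z2|]; last exact: expr0z.
by apply: exprzDr; rewrite unitfE.
Qed.

Lemma prodr_mulX (K : comPzRingType) (I : finType) (x : K) (f : I -> K) (e : I -> nat) :
  \prod_j (x * f j) ^+ e j = x ^+ (\sum_j e j) * \prod_j f j ^+ e j.
Proof. by rewrite -prodrXr -big_split; apply: eq_bigr => j _; rewrite exprMn. Qed.

Section Monomials.
Variables (n m : nat) (a : 'I_m -> 'rV[int]_n).

Definition laurent_monomial (K : fieldType) (t : 'I_n -> K) (b : 'rV[int]_n) : K :=
  \prod_(i < n) t i ^ b 0 i.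

Lemma laurent_monomial_sum (K : fieldType) (t : 'I_n -> K) (v : 'I_m -> nat) :
  (forall i, t i != 0) ->
  laurent_monomial t (\sum_j (v j)%:Z *: a j) = \prod_j laurent_monomial t (a j) ^+ v j.
Proof.
move=> t_neq0; rewrite /laurent_monomial.
rewrite (eq_bigr (fun i => \prod_j t i ^ ((v j)%:Z * a j 0 i))); last first.
  move=> i _; rewrite -exprz_sum // summxE.
  by congr (_ ^ _); apply: eq_bigr => j _; rewrite mxE.
rewrite exchange_big /=; apply: eq_bigr => j _; rewrite -prodrXl.
by apply: eq_bigr => i _; rewrite mulrC -exprz_exp.
Qed.

Lemma mono_sum (R : realType) (t : 'rV[R]_n) (v : 'I_m -> nat) :
  (forall i, 0 < t 0 i) ->
  mono (\sum_j (v j)%:Z *: a j) t = \prod_j mono (a j) t ^+ v j.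
Proof. by move=> t_gt0; apply: laurent_monomial_sum => i; rewrite lt0r_neq0. Qed.

Lemma mono_gt0 (R : realType) (t : 'rV[R]_n) b : (forall i, 0 < t 0 i) -> 0 < mono b t.
Proof. by move=> t_gt0; apply: prodr_gt0 => i _; rewrite exprz_gt0. Qed.

Lemma inY_binomial (R : realType) (y : 'I_m -> R[i]) (al be : 'I_m -> nat) :
  inY a y -> (\sum_j al j = \sum_j be j)%N ->
  \sum_j (al j)%:Z *: a j = \sum_j (be j)%:Z *: a j ->
  \prod_j y j ^+ al j = \prod_j y j ^+ be j.
Proof.
move=> Yy sum_eq vec_eq.
have evalX (z : 'I_m -> R[i]) (e : 'I_m -> nat) :
    mpoly.meval z (mpoly.mpolyX _ (mpoly.Multinom [tuple e j | j < m])) = \prod_j z j ^+ e j.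
  by rewrite mpoly.mevalX; apply: eq_bigr => j _; rewrite mpoly.multinomE tnth_mktuple.
apply/eqP; rewrite -subr_eq0; apply/eqP.
have := Yy (mpoly.mpolyX R[i] (mpoly.Multinom [tuple al j | j < m])
            - mpoly.mpolyX R[i] (mpoly.Multinom [tuple be j | j < m])).
rewrite mpoly.mevalB !evalX; apply=> u t u_neq0 t_neq0; rewrite mpoly.mevalB !evalX.
rewrite (prodr_mulX u (fun j => laurent_monomial t (a j)) al).
rewrite (prodr_mulX u (fun j => laurent_monomial t (a j)) be).
by rewrite -!laurent_monomial_sum // vec_eq sum_eq subrr.
Qed.

Lemma inY_binomial_real (R : realType) (y : 'I_m -> R) (al be : 'I_m -> nat) :
  inY a (fun j => (y j)%:C%C) -> (\sum_j al j = \sum_j be j)%N ->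
  \sum_j (al j)%:Z *: a j = \sum_j (be j)%:Z *: a j ->
  \prod_j y j ^+ al j = \prod_j y j ^+ be j.
Proof.
move=> Yy sum_eq vec_eq; have := inY_binomial Yy sum_eq vec_eq.
have toC (e : 'I_m -> nat) : \prod_j (y j)%:C%C ^+ e j = (\prod_j y j ^+ e j)%:C%C.
  by rewrite rmorph_prod; apply: eq_bigr => j _; rewrite rmorphXn.
by rewrite !toC => /(congr1 (@complex.Re R)).
Qed.

End Monomials.

Section Geometry.
Variables (R : realType) (n m : nat) (a : 'I_m -> 'rV[int]_n).
Local Notation toR := (@toR R n).

Lemma dotR_sum (w : 'rV[R]_n) (I : finType) (l : I -> R) (q : I -> 'rV[R]_n) :
  dotR w (\sum_i l i *: q i) = \sum_i l i * dotR w (q i).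
Proof.
rewrite /dotR; under eq_bigr => k _ do rewrite summxE mulr_sumr.
rewrite exchange_big /=; apply: eq_bigr => i _; rewrite mulr_sumr.
by apply: eq_bigr => k _; rewrite mxE; ring.
Qed.

Lemma dotR_toR_sum (w : 'rV[R]_n) (v : 'I_m -> nat) :
  dotR w (toR (\sum_j (v j)%:Z *: a j)) = \sum_j (v j)%:R * dotR w (toR (a j)).
Proof.
rewrite -dotR_sum; congr (dotR w _); apply/rowP => k.
rewrite !mxE !summxE rmorph_sum /=.
by apply: eq_bigr => j _; rewrite !mxE rmorphM.
Qed.

Lemma conv_sub (P : set 'rV[R]_n) : P `<=` conv P.
Proof.
move=> p Pp; exists 1%N, (fun=> p), (fun=> 1).
by split; rewrite ?big_ord1 ?scale1r.
Qed.

Lemma conv_dotR_le (P : set 'rV[R]_n) w h :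
  (forall p, P p -> dotR w p <= h) -> forall x, conv P x -> dotR w x <= h.
Proof.
move=> P_le x [p [q [l [Pq l_ge0 l_sum1 ->]]]]; rewrite dotR_sum.
apply: (@le_trans _ _ (\sum_(i < p) l i * h)); last by rewrite -mulr_suml l_sum1 mul1r.
by apply: ler_sum => i _; rewrite ler_wpM2l ?P_le.
Qed.

Lemma conv_dotR_attained (P : set 'rV[R]_n) w h x :
  (forall p, P p -> dotR w p <= h) -> conv P x -> dotR w x = h ->
  exists p, P p /\ dotR w p = h.
Proof.
move=> P_le cx; apply: contraPP => no_p; move: cx => [p [q [l [Pq l_ge0 l_sum1 ->]]]].
rewrite dotR_sum => E.
have q_lt i : dotR w (q i) < h.
  by rewrite lt_neqAle P_le // andbT; apply/eqP => qi; apply: no_p; exists (q i).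
have [i l_gt0] : exists i, 0 < l i.
  apply: contrapT => l_le0; move: l_sum1; rewrite big1 => [/eqP | i _].
    by rewrite eq_sym oner_eq0.
  by apply/eqP; rewrite eq_le l_ge0 andbT leNgt; apply/negP => li; apply: l_le0; exists i.
have : 0 < \sum_(i < p) l i * (h - dotR w (q i)).
  rewrite (bigD1 i) //= ltr_wpDr ?mulr_gt0 ?subr_gt0 //.
  by apply: sumr_ge0 => j _; rewrite mulr_ge0 // subr_ge0 ltW.
under eq_bigr => j _ do rewrite mulrBr.
by rewrite sumrB -mulr_suml l_sum1 mul1r E subrr ltxx.
Qed.

Section HyperplaneFace.
Variables (w : 'rV[R]_n) (h : R).
Hypothesis A_le : forall j, dotR w (toR (a j)) <= h.

Definition hyperplane_face := [set x | conv (toR @` range a) x /\ dotR w x = h].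

Lemma range_dotR_le p : (toR @` range a) p -> dotR w p <= h.
Proof. by move=> [_ [j _ <-] <-]. Qed.

Lemma hyperplane_face_point j : dotR w (toR (a j)) = h -> hyperplane_face (toR (a j)).
Proof. by move=> e; split => //; apply: conv_sub; exists (a j). Qed.

Lemma weighted_dotR_eq_iff (v : 'I_m -> nat) k : (\sum_j v j = k)%N ->
  (\sum_j (v j)%:R * dotR w (toR (a j)) = k%:R * h <->
   forall j, (0 < v j)%N -> dotR w (toR (a j)) = h).
Proof.
move=> v_sum.
have E : k%:R * h - \sum_j (v j)%:R * dotR w (toR (a j)) =
         \sum_j (v j)%:R * (h - dotR w (toR (a j))).
  by rewrite -v_sum natr_sum mulr_suml -sumrB; apply: eq_bigr => j _; ring.
have gap_ge0 j : 0 <= (v j)%:R * (h - dotR w (toR (a j))) by rewrite mulr_ge0 ?subr_ge0.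
split=> [sum_eq j v_gt0 | on_face].
  have gaps_eq0 : \sum_j (v j)%:R * (h - dotR w (toR (a j))) = 0.
    by rewrite -E sum_eq subrr.
  have /eqP := @psumr_eq0P _ _ _ _ (fun j _ => gap_ge0 j) gaps_eq0 j isT.
  by rewrite mulf_eq0 pnatr_eq0 eqn0Ngt v_gt0 /= subr_eq0 => /eqP.
apply/eqP; rewrite eq_sym -subr_eq0 E; apply/eqP/big1 => j _.
by case: (posnP (v j)) => [->|/on_face ->]; rewrite ?mul0r ?subrr ?mulr0.
Qed.

Lemma dotR_kdil_eq_iff (v : 'I_m -> nat) k : (\sum_j v j = k)%N ->
  (dotR w (toR (\sum_j (v j)%:Z *: a j)) = k%:R * h <->
   forall j, (0 < v j)%N -> dotR w (toR (a j)) = h).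
Proof. by move=> v_sum; rewrite dotR_toR_sum; apply: weighted_dotR_eq_iff. Qed.

Lemma kdil_hyperplane_face_iff (v : 'I_m -> nat) k b :
  (\sum_j v j = k)%N -> b = \sum_j (v j)%:Z *: a j ->
  (kdil a (toR @^-1` hyperplane_face) k b <->
   forall j, (0 < v j)%N -> dotR w (toR (a j)) = h).
Proof.
move=> v_sum ->; split=> [[v' [v'_sum v'_face b_eq]] | on_face].
  apply/(dotR_kdil_eq_iff v_sum); rewrite b_eq; apply/(dotR_kdil_eq_iff v'_sum).
  by move=> j /v'_face [].
by exists v; split => // j /on_face; apply: hyperplane_face_point.
Qed.

End HyperplaneFace.

Lemma kA_seq_kdil k b : b \in kA_seq a k -> kdil a setT k b.
Proof.
rewrite mem_undup => /mapP [v]; rewrite mem_filter => /andP [/eqP v_sum _] ->.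
by exists (fun j => (v j : nat)); split.
Qed.

Lemma fhat_on_face k c v w h u (t : 'rV[R]_n) (y : 'I_m -> R) :
  (forall j, dotR w (toR (a j)) <= h) -> (forall i, 0 < t 0 i) ->
  rep_choice a k v ->
  (forall j, y j = if dotR w (toR (a j)) == h then u * mono (a j) t else 0) ->
  fhat a k c v y = u ^+ k * trunc a k c (kdil a (toR @^-1` hyperplane_face w h) k) t.
Proof.
move=> A_le t_gt0 rep y_eq.
rewrite /fhat /trunc mulr_sumr [RHS]big_mkcond /=; apply: eq_big_seq => b /kA_seq_kdil Kb.
have [v_sum b_eq] := rep b Kb.
case: (pselect (forall j, (0 < v b j)%N -> dotR w (toR (a j)) = h)) => [on_face | off_face].
  rewrite (mem_set ((kdil_hyperplane_face_iff A_le v_sum b_eq).2 on_face)).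
  rewrite (eq_bigr (fun j => (u * mono (a j) t) ^+ v b j)); last first.
    by move=> j _; rewrite y_eq; case: (posnP (v b j)) => [->|/on_face ->]; rewrite ?expr0 ?eqxx.
  by rewrite (prodr_mulX u (fun j => mono (a j) t)) v_sum -mono_sum // -b_eq; ring.
rewrite (memNset (fun Kb => off_face ((kdil_hyperplane_face_iff A_le v_sum b_eq).1 Kb))).
move: off_face => /existsNP [j /not_implyP [v_gt0 off_j]].
rewrite (bigD1 j) //= y_eq; case: eqP => // _.
by rewrite expr0n eqn0Ngt v_gt0 mul0r mulr0.
Qed.

End Geometry.

Lemma poly_eq0_off0 (K : numClosedFieldType) (Q : {poly K}) :
  (forall x : K, x != 0 -> Q.[x] = 0) -> Q = 0.
Proof.
move=> Q_root; apply/eqP; apply: contraT => Q_neq0.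
have := @max_poly_roots _ Q [seq i.+1%:R : K | i <- iota 0 (size Q)] Q_neq0.
rewrite size_map size_iota ltnn; apply.
  by apply/allP => _ /mapP [i _ ->]; apply/eqP/Q_root; rewrite pnatr_eq0.
by rewrite map_inj_uniq ?iota_uniq // => i j /eqP; rewrite eqr_nat eqSS => /eqP.
Qed.

Section FacePointsInY.
Variables (R : realType) (n m : nat) (a : 'I_m -> 'rV[int]_n).

(* Substituting u = x^H, t_i = t_i x^(-W_i) in a polynomial vanishing on the
   parametrization gives a univariate polynomial in x vanishing on C^*; at
   x = 0 only the monomials of points on the face W.a = H survive. *)
Lemma inY_face_point (W : 'I_n -> int) (H : int) (t : 'rV[R]_n) :
  (forall j, \sum_i W i * a j 0 i <= H) -> (forall i, 0 < t 0 i) ->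
  inY a (fun j => (if \sum_i W i * a j 0 i == H then mono (a j) t else 0)%:C%C).
Proof.
move=> A_le t_gt0 p p_vanish.
pose e j := `|(H - \sum_i W i * a j 0 i)%R|%N.
have eE j : (e j)%:Z = H - \sum_i W i * a j 0 i by rewrite gez0_abs // subr_ge0.
pose T j : R[i] := (mono (a j) t)%:C%C.
have tC_neq0 i : (t 0 i)%:C%C != 0 :> R[i].
  by rewrite (fmorph_eq0 (real_complex R)) lt0r_neq0.
have TE j : T j = \prod_i (t 0 i)%:C%C ^ a j 0 i.
  rewrite /T /mono rmorph_prod; apply: eq_bigr => i _.
  by rewrite rmorphXz // unitfE lt0r_neq0.
have vanish x : x != 0 -> mpoly.meval (fun j => T j * x ^+ e j) p = 0.
  move=> x_neq0; have x_unit : x \is a GRing.unit by rewrite unitfE.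
  have := p_vanish (x ^ H) (fun i => (t 0 i)%:C%C * x ^ (- W i)) (expfz_neq0 _ x_neq0)
    (fun i => mulf_neq0 (tC_neq0 i) (expfz_neq0 _ x_neq0)).
  suff -> : (fun j : 'I_m => x ^ H * \prod_(i < n) ((t 0 i)%:C%C * x ^ (- W i)) ^ a j 0 i)
            = (fun j => T j * x ^+ e j) by [].
  apply: funext => j.
  rewrite (eq_bigr (fun i => (t 0 i)%:C%C ^ a j 0 i * x ^ (- W i * a j 0 i))); last first.
    by move=> i _; rewrite exprzMl ?unitfE ?expfz_neq0 // exprz_exp.
  rewrite big_split /= -TE -exprz_sum // mulrCA -exprzDr //; congr (_ * _).
  rewrite -[x ^+ e j]/(x ^ (e j)%:Z) eE; congr (x ^ _).
  by congr (_ + _); rewrite -sumrN; apply: eq_bigr => i _; rewrite mulNr.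
pose Q : {poly R[i]} := \sum_(mm <- mpoly.msupp p)
   (mpoly.mcoeff mm p)%:P * \prod_j ((T j)%:P * 'X^(e j)) ^+ (mpoly.fun_of_multinom mm j).
have QE x : Q.[x] = mpoly.meval (fun j => T j * x ^+ e j) p.
  rewrite mpoly.mevalE horner_sum; apply: eq_bigr => mm _.
  rewrite hornerM hornerC horner_prod; congr (_ * _); apply: eq_bigr => j _.
  by rewrite horner_exp hornerM hornerC hornerXn.
have /esym := QE 0; rewrite (poly_eq0_off0 (fun x x0 => etrans (QE x) (vanish x x0))).
rewrite horner0 => <-; congr (mpoly.meval _ p); apply: funext => j.
rewrite /T expr0n -eqz_nat eE subr_eq0 eq_sym.
by case: eqP; rewrite ?mulr1 ?mulr0.
Qed.

End FacePointsInY.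

Section IntegralNormal.
Variables (R : realType) (n m : nat) (a : 'I_m -> 'rV[int]_n).
Local Notation toR := (@toR R n).

Lemma integral_face_normal (w : 'rV[R]_n) (h : R) :
  (forall j, dotR w (toR (a j)) <= h) ->
  face_indices a (fun j => dotR w (toR (a j)) == h).
Proof.
move=> A_le; case: (face_or_outward_relation a (fun j => dotR w (toR (a j)) == h)) => //.
move=> [al [be [be_face [j0 [off_j0 al_j0]] sum_eq vec_eq]]].
have on_face (v : 'I_m -> nat) := weighted_dotR_eq_iff A_le (erefl (\sum_j v j)%N).
have be_dot : \sum_j (be j)%:R * dotR w (toR (a j)) = (\sum_j be j)%:R * h.
  by apply/on_face => j; apply: contraTeq => /be_face ->.
have al_dot : \sum_j (al j)%:R * dotR w (toR (a j)) = (\sum_j al j)%:R * h.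
  by rewrite -dotR_toR_sum vec_eq dotR_toR_sum be_dot sum_eq.
by move: off_j0; rewrite ((on_face al).1 al_dot j0 al_j0) eqxx.
Qed.

End IntegralNormal.

Section AffineRelations.
Variables (R : realType) (n m : nat) (a : 'I_m -> 'rV[int]_n).
Variables (S : pred 'I_m) (c : 'I_m -> R).
Hypothesis c_relations : forall al be : 'I_m -> nat,
  (forall j, ~~ S j -> al j = 0%N /\ be j = 0%N) ->
  (\sum_j al j = \sum_j be j)%N -> \sum_j (al j)%:Z *: a j = \sum_j (be j)%:Z *: a j ->
  \sum_j (al j)%:R * c j = \sum_j (be j)%:R * c j.

Lemma integral_relation_orthogonal (z : 'I_m -> int) :
  (forall j, ~~ S j -> z j = 0) -> \sum_j z j = 0 -> \sum_j z j *: a j = 0 ->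
  \sum_j (z j)%:~R * c j = 0.
Proof.
move=> z_supp z_sum z_vec.
pose al j := if 0 <= z j then `|z j|%N else 0%N.
pose be j := if z j < 0 then `|z j|%N else 0%N.
have zE j : z j = (al j)%:Z - (be j)%:Z.
  rewrite /al /be; case: (lerP 0 (z j)) => z_sgn.
    by rewrite gez0_abs // subr0.
  by rewrite ltz0_abs // sub0r opprK.
have al_be_supp j : ~~ S j -> al j = 0%N /\ be j = 0%N.
  by move/z_supp; rewrite /al /be => ->.
have sum_eq : (\sum_j al j = \sum_j be j)%N.
  apply/eqP; rewrite -eqz_nat -[X in X == _]intz -[X in _ == X]intz !sumMz.
  rewrite -subr_eq0 -sumrB -[X in _ == X]z_sum.
  by apply/eqP; apply: eq_bigr => j _; rewrite !intz zE.
have vec_eq : \sum_j (al j)%:Z *: a j = \sum_j (be j)%:Z *: a j.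
  apply/eqP; rewrite -subr_eq0 -sumrB -[X in _ == X]z_vec.
  by apply/eqP; apply: eq_bigr => j _; rewrite -scalerBl zE.
move: (c_relations al_be_supp sum_eq vec_eq) => /eqP.
rewrite -subr_eq0 -sumrB => /eqP rel; rewrite -[RHS]rel.
by apply: eq_bigr => j _; rewrite zE rmorphB -mulrBl.
Qed.

(* The linear form c on the points of S factors through (1, a_j) because
   every rational kernel vector of that matrix clears denominators to an
   integral affine relation supported on S. *)
Lemma affine_of_relations :
  exists (x0 : R) (xs : 'I_n -> R), forall j, S j -> c j = x0 + \sum_i (a j 0 i)%:~R * xs i.
Proof.
pose BQ : 'M[rat]_(1 + n, m) :=
  col_mx (\row_j (S j)%:R) (\matrix_(i, j) if S j then (a j 0 i)%:~R else 0).
pose cv : 'rV[R]_m := \row_j (if S j then c j else 0).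
suff /submxP [X cvX] : (cv <= map_mx ratr BQ)%MS.
  exists (lsubmx X 0 0), (fun i => rsubmx X 0 i) => j Sj.
  have := congr1 (fun M : 'rV[R]_m => M 0 j) cvX.
  rewrite -[X in X *m _](hsubmxK X) map_col_mx mul_row_col /cv !mxE Sj => ->.
  rewrite big_ord1 !mxE Sj rmorph1 mulr1; congr (_ + _).
  by apply: eq_bigr => i _; rewrite !mxE Sj ratr_int mulrC.
rewrite submxE -map_cokermx; apply/eqP/rowP => l; rewrite !mxE.
have BK := mulmx_coker BQ.
pose z j := cokermx BQ j l.
have [D [zz [D_gt0 Hz]]] := rat_common_denominator z.
pose zS j := if S j then zz j else 0.
have zSE j : (zS j)%:~R = D%:~R * (if S j then z j else 0) :> rat.
  by rewrite /zS; case: (S j); rewrite ?mulr0 // -Hz mulrC.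
have int_inj (x y : int) : x%:~R = y%:~R :> rat -> x = y by move/eqP; rewrite eqr_int => /eqP.
have top : \sum_j (if S j then z j else 0) = 0.
  have := congr1 (fun M : 'M[rat]_(1 + n, m) => M (lshift n 0) l) BK.
  rewrite !mxE => E; rewrite -[RHS]E.
  by apply: eq_bigr => j _; rewrite col_mxEu mxE; case: (S j); rewrite ?mul1r ?mul0r.
have bottom i : \sum_j (if S j then (a j 0 i)%:~R * z j else 0) = 0.
  have := congr1 (fun M : 'M[rat]_(1 + n, m) => M (rshift 1 i) l) BK.
  rewrite !mxE => E; rewrite -[RHS]E.
  by apply: eq_bigr => j _; rewrite col_mxEd mxE; case: (S j); rewrite ?mul0r.
have zS_c : \sum_j (zS j)%:~R * c j = 0.
  apply: integral_relation_orthogonal => [j /negbTE Sj | | ]; first by rewrite /zS Sj.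
    apply: int_inj; rewrite rmorph_sum /= (eq_bigr _ (fun j _ => zSE j)).
    by rewrite -mulr_sumr top mulr0.
  apply/rowP => i; rewrite summxE mxE; apply: int_inj; rewrite rmorph_sum /=.
  rewrite (eq_bigr (fun j => D%:~R * (if S j then (a j 0 i)%:~R * z j else 0))).
    by rewrite -mulr_sumr bottom mulr0.
  by move=> j _; rewrite mxE rmorphM /= zSE; case: (S j); rewrite ?mulr0 ?mul0r //; ring.
have D_neq0 : (D%:~R : R) != 0 by rewrite intr_eq0 gt_eqF.
apply/eqP; rewrite -(mulIr_eq0 _ (mulIf D_neq0)) mulr_suml; apply/eqP.
rewrite -[RHS]zS_c; apply: eq_bigr => j _; rewrite mxE /zS.
case: (S j); last by rewrite !mul0r.
by rewrite mxE -(ratr_int R (zz j)) -Hz rmorphM /= ratr_int; ring.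
Qed.

End AffineRelations.

Lemma expR_exprz (R : realType) (x : R) (z : int) : expR x ^ z = expR (z%:~R * x).
Proof.
by case: z => k; rewrite ?NegzE -?exprnN ?rmorphN /= ?mulNr ?expRN expRM_natl.
Qed.

Lemma ln_prodrX (R : realType) (I : finType) (y : I -> R) (e : I -> nat) :
  (forall j, e j != 0%N -> 0 < y j) ->
  ln (\prod_j y j ^+ e j) = \sum_j (e j)%:R * ln (y j).
Proof.
move=> y_gt0.
have [] : 0 < \prod_j y j ^+ e j /\ ln (\prod_j y j ^+ e j) = \sum_j (e j)%:R * ln (y j) => //.
apply: (big_rec2 (fun p s => 0 < p /\ ln p = s)); first by rewrite ltr01 ln1.
move=> j p s _ [p_gt0 <-].
case: (eqVneq (e j) 0%N) => [-> | ej]; first by rewrite expr0 mul1r mul0r add0r.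
have yj := y_gt0 j ej.
by rewrite mulr_gt0 ?exprn_gt0 // lnM ?posrE ?exprn_gt0 // lnXn // mulr_natl.
Qed.

Section NonnegativePointsOfY.
Variables (R : realType) (n m : nat) (a : 'I_m -> 'rV[int]_n).
Local Notation toR := (@toR R n).

Lemma inY_nonneg_face_form (y : 'I_m -> R) :
  (forall j, 0 <= y j) -> inY a (fun j => (y j)%:C%C) ->
  exists (w : 'rV[R]_n) (h u : R) (t : 'rV[R]_n),
    [/\ forall j, dotR w (toR (a j)) <= h, 0 < u, forall i, 0 < t 0 i &
        forall j, y j = if dotR w (toR (a j)) == h then u * mono (a j) t else 0].
Proof.
move=> y_ge0 Yy.
pose S j := y j != 0.
have y_gt0 j : S j -> 0 < y j by rewrite lt_neqAle eq_sym y_ge0 andbT.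
case: (face_or_outward_relation a S) => [[W [H W_face]] | ]; last first.
  move=> [al [be [be_S [j0 [off_j0 al_j0]] sum_eq vec_eq]]]; exfalso.
  have := inY_binomial_real Yy sum_eq vec_eq.
  rewrite (bigD1 j0) //= (eqP (negbNE off_j0)) expr0n eqn0Ngt al_j0 mul0r => /esym /eqP.
  apply/negP; rewrite gt_eqF //; apply: prodr_gt0 => j _.
  by case: (boolP (S j)) => Sj; [rewrite exprn_gt0 ?y_gt0 | rewrite be_S // expr0 ltr01].
have [x0 [xs log_affine]] : exists (x0 : R) (xs : 'I_n -> R),
    forall j, S j -> ln (y j) = x0 + \sum_i (a j 0 i)%:~R * xs i.
  apply: affine_of_relations => al be al_be_S sum_eq vec_eq.
  have := inY_binomial_real Yy sum_eq vec_eq => /(congr1 (@ln R)).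
  have supp_gt0 (e : 'I_m -> nat) : (forall j, ~~ S j -> e j = 0%N) ->
      forall j, e j != 0%N -> 0 < y j.
    by move=> e_S j e_neq0; apply: y_gt0; apply: contraTT e_neq0 => /e_S ->.
  by rewrite !ln_prodrX //; apply: supp_gt0 => j /al_be_S [].
pose w : 'rV[R]_n := \row_i (W i)%:~R.
have dotE j : dotR w (toR (a j)) = (\sum_i W i * a j 0 i)%:~R.
  by rewrite rmorph_sum; apply: eq_bigr => i _; rewrite !mxE rmorphM.
exists w, H%:~R, (expR x0), (\row_i expR (xs i)); split.
- by move=> j; rewrite dotE ler_int; case: (W_face j).
- exact: expR_gt0.
- by move=> i; rewrite mxE expR_gt0.
move=> j; rewrite dotE eqr_int (W_face j).2.
case: (boolP (S j)) => Sj; last by apply/eqP; rewrite negbK in Sj.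
rewrite -(lnK (y_gt0 j Sj)) log_affine // expRD /mono expR_sum; congr (_ * _).
by apply: eq_bigr => i _; rewrite mxE expR_exprz.
Qed.

End NonnegativePointsOfY.

Section Equivalences.
Variables (R : realType) (n m : nat) (a : 'I_m -> 'rV[int]_n).
Local Notation toR := (@toR R n).

Definition positive_on_A_faces k (c : 'rV[int]_n -> R) :=
  forall F, face (conv (toR @` range a)) F -> F !=set0 ->
    forall t : 'rV[R]_n, (forall i, 0 < t 0 i) ->
      0 < trunc a k c (kdil a (toR @^-1` F) k) t.

Definition positive_on_kA_faces k (c : 'rV[int]_n -> R) :=
  forall G, face (conv (toR @` kdil a setT k)) G -> G !=set0 ->
    forall t : 'rV[R]_n, (forall i, 0 < t 0 i) ->
      0 < trunc a k c (toR @^-1` G) t.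

Lemma trunc_eq_on_kA k (c : 'rV[int]_n -> R) (S1 S2 : set 'rV[int]_n) (t : 'rV[R]_n) :
  (forall b, kdil a setT k b -> (S1 b <-> S2 b)) ->
  trunc a k c S1 t = trunc a k c S2 t.
Proof.
move=> S12; rewrite /trunc !(big_mkcond (fun b => b \in _)).
apply: eq_big_seq => b /kA_seq_kdil /S12 [S1b S2b].
by congr (if _ then _ else _); apply/idP/idP => /set_mem ?; apply: mem_set; auto.
Qed.

Lemma rep_choice_exists k : exists v, rep_choice a k v.
Proof.
suff /choice [v vP] : forall b, exists vb : 'I_m -> nat, kdil a setT k b ->
    (\sum_j vb j)%N = k /\ b = \sum_j (vb j)%:Z *: a j by exists v.
move=> b; case: (pselect (kdil a setT k b)) => [[v [v_sum _ b_eq]] | notK]; first by exists v.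
by exists (fun=> 0%N) => /notK.
Qed.

Lemma kdil_dotR_le k w h b : (forall j, dotR w (toR (a j)) <= h) -> kdil a setT k b ->
  dotR w (toR b) <= k%:R * h.
Proof.
move=> A_le [v [v_sum _ ->]]; rewrite dotR_toR_sum -v_sum natr_sum mulr_suml.
by apply: ler_sum => j _; rewrite ler_wpM2l.
Qed.

Lemma kdil_scaled_point k j0 :
  k%:Z *: a j0 = \sum_j (if j == j0 then k else 0%N)%:Z *: a j.
Proof. by rewrite (bigD1 j0) //= eqxx big1 ?addr0 // => j /negbTE ->; rewrite scale0r. Qed.

Lemma kdil_scaled k j0 : kdil a setT k (k%:Z *: a j0).
Proof.
exists (fun j => if j == j0 then k else 0%N); split => //; last exact: kdil_scaled_point.
by rewrite (bigD1 j0) //= eqxx big1 => [|j /negbTE ->]; first exact: addn0.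
Qed.

Lemma dotR_scaled k w j0 : dotR w (toR (k%:Z *: a j0)) = k%:R * dotR w (toR (a j0)).
Proof.
rewrite kdil_scaled_point dotR_toR_sum (bigD1 j0) //= eqxx big1 ?addr0 //.
by move=> j /negbTE ->; rewrite mul0r.
Qed.

Lemma copositive_of_A_faces k (c : 'rV[int]_n -> R) :
  positive_on_A_faces k c -> strictly_copositive a k c.
Proof.
move=> pos y y_ge0 y_neq0 Yy v rep.
have [w [h [u [t [A_le u_gt0 t_gt0 y_eq]]]]] := inY_nonneg_face_form y_ge0 Yy.
rewrite (fhat_on_face c A_le t_gt0 rep y_eq) mulr_gt0 ?exprn_gt0 // pos //.
  by exists w, h; split => //; apply: conv_dotR_le (range_dotR_le A_le).
case: y_neq0 => j; rewrite y_eq; case: ifP => [/eqP on_j _ | _]; last by rewrite eqxx.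
by exists (toR (a j)); apply: hyperplane_face_point.
Qed.

Lemma A_faces_of_copositive k (c : 'rV[int]_n -> R) :
  strictly_copositive a k c -> positive_on_A_faces k c.
Proof.
move=> copos F [w [h [conv_le ->]]] F_neq0 t t_gt0.
have A_le j : dotR w (toR (a j)) <= h by apply/conv_le/conv_sub; exists (a j).
pose y j := if dotR w (toR (a j)) == h then 1 * mono (a j) t else 0.
have [v rep] := rep_choice_exists k.
rewrite -[trunc _ _ _ _ _]mul1r -(expr1n _ k) -(fhat_on_face c A_le t_gt0 rep (y := y)) //.
apply: copos rep.
- by move=> j; rewrite /y; case: eqP => _ //; rewrite mul1r ltW // mono_gt0.
- case: F_neq0 => x [cx dx].
  have [_ [[_ [j _ <-] <-] on_j]] := conv_dotR_attained (range_dotR_le A_le) cx dx.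
  by exists j; rewrite /y on_j eqxx mul1r gt_eqF // mono_gt0.
- have [W [H W_face]] := integral_face_normal A_le.
  suff -> : (fun j => (y j)%:C%C) =
            (fun j => (if \sum_i W i * a j 0 i == H then mono (a j) t else 0)%:C%C).
    by apply: inY_face_point => // j; case: (W_face j).
  by apply: funext => j; rewrite /y mul1r (W_face j).2.
Qed.

Lemma kA_faces_of_A_faces (m_gt0 : (0 < m)%N) k (c : 'rV[int]_n -> R) :
  positive_on_A_faces k c -> positive_on_kA_faces k c.
Proof.
move=> pos G [w [h' [conv_le ->]]] G_neq0 t t_gt0.
case: (arg_maxP (fun j => dotR w (toR (a j))) (isT : predT (Ordinal m_gt0))) => jm _ jm_max.
pose h := dotR w (toR (a jm)).
have A_le j : dotR w (toR (a j)) <= h by apply: jm_max.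
have kA_le p : (toR @` kdil a setT k) p -> dotR w p <= h' by move=> ?; apply/conv_le/conv_sub.
have h'_eq : h' = k%:R * h.
  apply/eqP; rewrite eq_le; apply/andP; split.
    case: G_neq0 => x [cx dx]; have [_ [[b Kb <-] <-]] := conv_dotR_attained kA_le cx dx.
    exact: kdil_dotR_le.
  by rewrite -dotR_scaled; apply: kA_le; exists (k%:Z *: a jm); first exact: kdil_scaled.
rewrite (@trunc_eq_on_kA k c _ (kdil a (toR @^-1` hyperplane_face a w h) k)); last first.
  move=> b Kb; case: (Kb) => v [v_sum _ b_eq].
  rewrite (kdil_hyperplane_face_iff A_le v_sum b_eq) -(dotR_kdil_eq_iff A_le v_sum) -b_eq h'_eq.
  by split=> [[] | on_face] //; split=> //; apply: conv_sub; exists b.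
apply: pos => //.
  by exists w, h; split => //; apply: conv_dotR_le (range_dotR_le A_le).
by exists (toR (a jm)); apply: hyperplane_face_point.
Qed.

Lemma A_faces_of_kA_faces k (c : 'rV[int]_n -> R) :
  positive_on_kA_faces k c -> positive_on_A_faces k c.
Proof.
move=> pos F [w [h [conv_le ->]]] F_neq0 t t_gt0.
have A_le j : dotR w (toR (a j)) <= h by apply/conv_le/conv_sub; exists (a j).
pose G := [set x | conv (toR @` kdil a setT k) x /\ dotR w x = k%:R * h].
rewrite (@trunc_eq_on_kA k c _ (toR @^-1` G)); last first.
  move=> b Kb; case: (Kb) => v [v_sum _ b_eq].
  rewrite (kdil_hyperplane_face_iff A_le v_sum b_eq) -(dotR_kdil_eq_iff A_le v_sum) -b_eq.
  by split=> [on_face | [] //]; split=> //; apply: conv_sub; exists b.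
apply: pos => //.
  exists w, (k%:R * h); split => //.
  by apply: conv_dotR_le => _ [b Kb <-]; apply: kdil_dotR_le.
case: F_neq0 => x [cx dx].
have [_ [[_ [j _ <-] <-] on_j]] := conv_dotR_attained (range_dotR_le A_le) cx dx.
exists (toR (k%:Z *: a j)); split; last by rewrite dotR_scaled on_j.
by apply: conv_sub; exists (k%:Z *: a j); first exact: kdil_scaled.
Qed.

End Equivalences.

Unset Implicit Arguments.

Theorem mainTheorem3 (R : realType) (n m : nat) (a : 'I_m -> 'rV[int]_n)
  (a_inj : injective a) (m_gt0 : (0 < m)%N) (k : nat)
  (c : 'rV[int]_n -> R) (c_supp : forall b, c b != 0 -> kdil a setT k b) :
  [/\ (strictly_copositive a k c <->
       (forall F, face (conv ((@toR R n) @` (range a))) F -> F !=set0 ->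
          forall t : 'rV[R]_n, (forall i, 0 < t 0 i) ->
            0 < trunc a k c (kdil a ((@toR R n) @^-1` F) k) t)),
      (strictly_copositive a k c <->
       (forall G, face (conv ((@toR R n) @` (kdil a setT k))) G -> G !=set0 ->
          forall t : 'rV[R]_n, (forall i, 0 < t 0 i) ->
            0 < trunc a k c ((@toR R n) @^-1` G) t))
    & ((forall F, face (conv ((@toR R n) @` (range a))) F -> F !=set0 ->
          forall t : 'rV[R]_n, (forall i, 0 < t 0 i) ->
            0 < trunc a k c (kdil a ((@toR R n) @^-1` F) k) t) <->
       (forall G, face (conv ((@toR R n) @` (kdil a setT k))) G -> G !=set0 ->
          forall t : 'rV[R]_n, (forall i, 0 < t 0 i) ->
            0 < trunc a k c ((@toR R n) @^-1` G) t))].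
Proof.
have ii_iii : strictly_copositive a k c <-> positive_on_A_faces a k c.
  by split; [apply: A_faces_of_copositive | apply: copositive_of_A_faces].
have iii_iv : positive_on_A_faces a k c <-> positive_on_kA_faces a k c.
  by split; [apply: kA_faces_of_A_faces | apply: A_faces_of_kA_faces].
by split=> //; rewrite ii_iii.
Qed.
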